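(* Let $N=\{1,\dots,n\}$, $n\ge2$, be a parallel-link network with unit demand and affine latencies $\ell_i(x_i)=a_ix_i+b_i$, $a_i>0$, $b_i\ge0$, and suppose $x_i(0)>0$ for all $i\in N$. Let $c\in\mathbb{R}_+$. For $t\in\mathbb{R}^N_+$ and a flow $x$, we have that $t\in\mathcal{T}(c)$ and $x=x(t)$ if and only if there exists $K\in\mathbb{R}$ such that (1) $a_ix_i+b_i+t_i=K$ for all $i\in N$; (2) $\sum_{i\in N}x_i=1$; (3) $t_i=\min\left\{\left(a_i+\frac{1}{\sum_{j\neq i}1/a_j}\right)x_i,\;c\right\}$ for all $i\in N$; (4) $x_i>0$ for all $i\in N$.
   Context: Parallel links $N$ from source to destination, one unit of flow; a flow is $x\in\mathbb{R}^N_+$ with $\sum_ix_i=1$. For tolls $t\in\mathbb{R}^N_+$, $x(t)$ denotes the unique Wardrop equilibrium for $t$: for all $i,j$ with $x_i>0$, $\ell_i(x_i)+t_i\le \ell_j(x_j)+t_j$; $x(0)$ is the untolled one. Profit $\Pi_i(t)=t_ix_i(t)$. $\mathcal{T}(c)$ is the set of $c$-capped subgame perfect Nash equilibria: toll vectors $t$ with $0\le t_i\le c$ for all $i$ such that for every $i$ and every $t'_i\in[0,c]$, $\Pi_i(t_i,t_{-i})\ge\Pi_i(t'_i,t_{-i})$ (flow recomputed as the Wardrop equilibrium). *)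

From Stdlib Require Import Reals Lra Arith.
Open Scope R_scope.

(* Links are indexed 0..n-1; vectors are functions nat -> R (values at
   indices >= n are irrelevant). *)

Definition sumN (n : nat) (f : nat -> R) : R := sum_f_R0 f (pred n).

Definition is_flow (n : nat) (x : nat -> R) : Prop :=
  (forall i, (i < n)%nat -> 0 <= x i) /\ sumN n x = 1.

Definition lat (a b : nat -> R) (i : nat) (y : R) : R := a i * y + b i.

Definition wardrop (n : nat) (a b t x : nat -> R) : Prop :=
  is_flow n x /\
  forall i j, (i < n)%nat -> (j < n)%nat -> 0 < x i ->
    lat a b i (x i) + t i <= lat a b j (x j) + t j.

Definition upd (t : nat -> R) (i : nat) (s : R) : nat -> R :=
  fun k => if Nat.eq_dec k i then s else t k.

(* t is a c-capped subgame perfect Nash equilibrium (t in T(c)).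
   Profits are computed at the (unique) Wardrop equilibria. *)
Definition capped_SPNE (n : nat) (a b : nat -> R) (c : R) (t : nat -> R) : Prop :=
  (forall i, (i < n)%nat -> 0 <= t i <= c) /\
  forall i, (i < n)%nat -> forall s, 0 <= s <= c ->
    forall x x', wardrop n a b t x -> wardrop n a b (upd t i s) x' ->
      s * x' i <= t i * x i.

From Stdlib Require Import Reals Lra Lia Classical FunctionalExtensionality.
Open Scope R_scope.

(* If link [i] raises its toll from [t i] to [s] while the others keep theirs, at
   least [(s - t i) / P_i] units of flow leave it, where
   [P_i = a i + 1 / sum_(j <> i) 1 / a j] ([inv_demand_slope]): the displaced flow
   spreads over the other links in proportion to [1 / a j]. When every link stays
   used this is exact, so near an equilibrium where all links are used, link [i]
   faces the linear demand [x i - (s - t i) / P_i], whose revenue under the cap [c]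
   is maximized exactly at [min (P_i x i, c)]. All links are used at an SPNE
   because an unused link could charge a small positive toll and still attract
   flow: the equilibrium cost level only rises with the tolls, and it lies above
   [b i] since [i] is used without tolls. *)

Definition mask (f : nat -> R) (i : nat) : nat -> R :=
  fun j => if Nat.eq_dec j i then 0 else f j.

Lemma sum_f_R0_split (f : nat -> R) (N i : nat) :
  (i <= N)%nat -> sum_f_R0 f N = f i + sum_f_R0 (mask f i) N.
Proof.
  induction N as [|N IH]; intros Hi; simpl.
  - replace i with 0%nat by lia. unfold mask; destruct (Nat.eq_dec 0 0); [lra | congruence].
  - destruct (Nat.eq_dec i (S N)) as [->|Hne].
    + rewrite (sum_eq (mask f (S N)) f).
      * unfold mask; destruct (Nat.eq_dec (S N) (S N)); [lra|congruence].
      * intros j Hj; unfold mask; destruct (Nat.eq_dec j (S N)); [lia|reflexivity].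
    + rewrite IH by lia.
      replace (mask f i (S N)) with (f (S N)); [lra|].
      unfold mask; destruct (Nat.eq_dec (S N) i); [lia | reflexivity].
Qed.

Lemma continuity_sum_f_R0 (g : nat -> R -> R) (N : nat) :
  (forall j, continuity (g j)) -> continuity (fun y => sum_f_R0 (fun j => g j y) N).
Proof.
  intros Hg; induction N as [|N IH]; simpl; [apply Hg|].
  exact (continuity_plus _ _ IH (Hg (S N))).
Qed.

Lemma continuity_Rmax0 (f : R -> R) : continuity f -> continuity (fun y => Rmax 0 (f y)).
Proof.
  intros Hf.
  replace (fun y => Rmax 0 (f y)) with (fun y => / 2 * (f y + Rabs (f y))).
  - apply continuity_scal, continuity_plus; [exact Hf|].
    exact (continuity_comp _ Rabs Hf Rcontinuity_abs).
  - apply functional_extensionality; intros y.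
    unfold Rmax, Rabs; destruct (Rle_dec 0 (f y)), (Rcase_abs (f y)); lra.
Qed.

Lemma exists_pos_lower_bound (n : nat) (x : nat -> R) :
  (forall j, (j < n)%nat -> 0 < x j) ->
  exists mu, 0 < mu /\ forall j, (j < n)%nat -> mu <= x j.
Proof.
  induction n as [|n IH]; intros Hx.
  - exists 1; split; [lra | intros; lia].
  - destruct IH as (mu & Hmu & Hle); [intros; apply Hx; lia|].
    exists (Rmin mu (x n)); split; [apply Rmin_glb_lt; auto|].
    intros j Hj; destruct (Nat.eq_dec j n) as [->|Hne]; [apply Rmin_r|].
    eapply Rle_trans; [apply Rmin_l | apply Hle; lia].
Qed.

Lemma linear_revenue_gap (P x t s : R) :
  P <> 0 -> s * (x - (s - t) / P) - t * x = (s - t) * (P * x - s) / P.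
Proof. intros; field; assumption. Qed.

(* Under the linear demand [s |-> x - (s - t) / P], the revenue-maximizing price
   capped at [c] is [Rmin (P * x) c]; the next two lemmas give the global and the
   local version of this. *)
Lemma capped_linear_revenue_max (P x c s : R) :
  0 < P -> 0 <= s <= c ->
  s * (x - (s - Rmin (P * x) c) / P) <= Rmin (P * x) c * x.
Proof.
  intros HP Hs. set (t := Rmin (P * x) c).
  assert (Hgap : (s - t) * (P * x - s) <= 0).
  { unfold t, Rmin; destruct (Rle_dec (P * x) c).
    - pose proof (Rle_0_sqr (s - P * x)); unfold Rsqr in *; lra.
    - assert (0 <= c - s) by lra; assert (0 <= P * x - s) by lra; nra. }
  pose proof (linear_revenue_gap P x t s ltac:(lra)).
  assert ((s - t) * (P * x - s) / P <= 0); [|lra].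
  unfold Rdiv; assert (0 < / P) by (apply Rinv_0_lt_compat; lra). nra.
Qed.

Lemma capped_linear_revenue_local_max (P x c t delta : R) :
  0 < P -> 0 < x -> 0 < delta -> 0 <= t <= c ->
  (forall s, 0 <= s <= c -> t - delta <= s <= t + delta ->
     s * (x - (s - t) / P) <= t * x) ->
  t = Rmin (P * x) c.
Proof.
  intros HP Hx Hdelta Ht Hopt.
  assert (Hprofitable : forall s, 0 <= s <= c -> t - delta <= s <= t + delta ->
            0 < (s - t) * (P * x - s) -> False).
  { intros s Hs Hsd Hpos. specialize (Hopt s Hs Hsd).
    pose proof (linear_revenue_gap P x t s ltac:(lra)).
    assert (0 < (s - t) * (P * x - s) / P); [|lra].
    unfold Rdiv; apply Rmult_lt_0_compat; [lra | apply Rinv_0_lt_compat; lra]. }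
  assert (Hup : t < c -> P * x <= t).
  { intros Htc; destruct (Rle_or_lt (P * x) t) as [|Hlt]; [assumption|exfalso].
    set (m := Rmin (Rmin c (P * x)) (t + delta)).
    assert (Hm : t < m) by (apply Rmin_glb_lt; [apply Rmin_glb_lt|]; lra).
    pose proof (Rmin_l (Rmin c (P * x)) (t + delta)).
    pose proof (Rmin_r (Rmin c (P * x)) (t + delta)).
    pose proof (Rmin_l c (P * x)); pose proof (Rmin_r c (P * x)).
    apply (Hprofitable ((t + m) / 2)); try split; unfold m in *; try lra.
    apply Rmult_lt_0_compat; lra. }
  assert (Hdown : 0 < t -> t <= P * x).
  { intros Htp; destruct (Rle_or_lt t (P * x)) as [|Hlt]; [assumption|exfalso].
    set (m := Rmax (Rmax 0 (P * x)) (t - delta)).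
    assert (Hm : m < t) by (apply Rmax_lub_lt; [apply Rmax_lub_lt|]; lra).
    pose proof (Rmax_l (Rmax 0 (P * x)) (t - delta)).
    pose proof (Rmax_r (Rmax 0 (P * x)) (t - delta)).
    pose proof (Rmax_l 0 (P * x)); pose proof (Rmax_r 0 (P * x)).
    apply (Hprofitable ((t + m) / 2)); try split; unfold m in *; try lra.
    nra. }
  assert (0 < P * x) by (apply Rmult_lt_0_compat; lra).
  unfold Rmin; destruct (Rle_dec (P * x) c); destruct (Rlt_or_le t c) as [Htc|Htc].
  - pose proof (Hup Htc); pose proof (Hdown ltac:(lra)); lra.
  - pose proof (Hdown ltac:(lra)); lra.
  - pose proof (Hup Htc); lra.
  - lra.
Qed.

Lemma upd_eq (t : nat -> R) (i : nat) (s : R) : upd t i s i = s.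
Proof. unfold upd; destruct (Nat.eq_dec i i); congruence. Qed.

Lemma upd_neq (t : nat -> R) (i j : nat) (s : R) : j <> i -> upd t i s j = t j.
Proof. intros; unfold upd; destruct (Nat.eq_dec j i); congruence. Qed.

Section Network.

Variable n : nat.
Hypothesis n_pos : (0 < n)%nat.

Lemma sumN_ext (f g : nat -> R) :
  (forall j, (j < n)%nat -> f j = g j) -> sumN n f = sumN n g.
Proof. intros H; apply sum_eq; intros; apply H; lia. Qed.

Lemma sumN_le (f g : nat -> R) :
  (forall j, (j < n)%nat -> f j <= g j) -> sumN n f <= sumN n g.
Proof. intros H; apply sum_Rle; intros; apply H; lia. Qed.

Lemma sumN_0 : sumN n (fun _ => 0) = 0.
Proof. unfold sumN; rewrite sum_cte; ring. Qed.

Lemma sumN_plus (f g : nat -> R) : sumN n (fun j => f j + g j) = sumN n f + sumN n g.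
Proof. apply plus_sum. Qed.

Lemma sumN_scal (f : nat -> R) (k : R) : sumN n (fun j => k * f j) = k * sumN n f.
Proof. unfold sumN; rewrite scal_sum; apply sum_eq; intros; ring. Qed.

Lemma sumN_split (f : nat -> R) (i : nat) :
  (i < n)%nat -> sumN n f = f i + sumN n (mask f i).
Proof. intros; apply sum_f_R0_split; lia. Qed.

Lemma sumN_mask_le (f g : nat -> R) (i : nat) :
  (forall j, (j < n)%nat -> j <> i -> f j <= g j) ->
  sumN n (mask f i) <= sumN n (mask g i).
Proof.
  intros H; apply sumN_le; intros j Hj; unfold mask.
  destruct (Nat.eq_dec j i); [lra | auto].
Qed.

Lemma sumN_ge_term (f : nat -> R) (k : nat) :
  (k < n)%nat -> (forall j, (j < n)%nat -> 0 <= f j) -> f k <= sumN n f.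
Proof.
  intros Hk H; rewrite (sumN_split f k Hk).
  pose proof (sumN_mask_le (fun _ => 0) f k (fun j Hj _ => H j Hj)) as Hm.
  rewrite (sumN_ext (mask (fun _ => 0) k) (fun _ => 0)), sumN_0 in Hm; [lra|].
  intros j _; unfold mask; destruct (Nat.eq_dec j k); reflexivity.
Qed.

Lemma sumN_lt (f g : nat -> R) (k : nat) :
  (k < n)%nat -> (forall j, (j < n)%nat -> f j <= g j) -> f k < g k ->
  sumN n f < sumN n g.
Proof.
  intros Hk Hle Hlt; rewrite (sumN_split f k Hk), (sumN_split g k Hk).
  pose proof (sumN_mask_le f g k (fun j Hj _ => Hle j Hj)); lra.
Qed.

Lemma flow_support (x : nat -> R) : is_flow n x -> exists j, (j < n)%nat /\ 0 < x j.
Proof.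
  intros [_ Hsum]; apply NNPP; intros Hno.
  assert (sumN n x <= 0); [|lra].
  rewrite <- sumN_0; apply sumN_le; intros j Hj.
  destruct (Rle_or_lt (x j) 0); [assumption | exfalso; eauto].
Qed.

Lemma flow_compare (x y : nat -> R) :
  is_flow n x -> is_flow n y -> exists j, (j < n)%nat /\ 0 < y j /\ x j <= y j.
Proof.
  intros Hx Hy; apply NNPP; intros Hno.
  destruct (flow_support y Hy) as (k & Hk & Hyk).
  destruct Hx as [Hx0 Hx1], Hy as [Hy0 Hy1].
  assert (Hbelow : forall j, (j < n)%nat -> 0 < y j -> y j < x j).
  { intros j Hj Hyj; destruct (Rle_or_lt (x j) (y j)); [exfalso; eauto | assumption]. }
  assert (Hle : forall j, (j < n)%nat -> y j <= x j).
  { intros j Hj; destruct (Rle_or_lt (y j) 0).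
    - specialize (Hx0 j Hj); lra.
    - left; auto. }
  pose proof (sumN_lt y x k Hk Hle (Hbelow k Hk Hyk)); lra.
Qed.

Variables a b : nat -> R.
Hypothesis a_pos : forall i, (i < n)%nat -> 0 < a i.
Hypothesis b_nonneg : forall i, (i < n)%nat -> 0 <= b i.

Lemma wardrop_of_level (t x : nat -> R) (K : R) :
  is_flow n x -> (forall j, (j < n)%nat -> lat a b j (x j) + t j = K) ->
  wardrop n a b t x.
Proof.
  intros Hx HK; split; [exact Hx|].
  intros i j Hi Hj _; rewrite (HK i Hi), (HK j Hj); lra.
Qed.

Lemma wardrop_common_level (t x : nat -> R) :
  wardrop n a b t x -> (forall j, (j < n)%nat -> 0 < x j) ->
  exists K, forall j, (j < n)%nat -> lat a b j (x j) + t j = K.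
Proof.
  intros [_ Hw] Hx; exists (lat a b 0 (x 0%nat) + t 0%nat); intros j Hj.
  pose proof (Hw j 0%nat Hj n_pos (Hx j Hj)).
  pose proof (Hw 0%nat j n_pos Hj (Hx 0%nat n_pos)); lra.
Qed.

Lemma wardrop_level_mono (t t' x y : nat -> R) :
  wardrop n a b t x -> wardrop n a b t' y ->
  (forall j, (j < n)%nat -> 0 < y j -> t j <= t' j) ->
  forall k m, (k < n)%nat -> (m < n)%nat -> 0 < x k ->
    lat a b k (x k) + t k <= lat a b m (y m) + t' m.
Proof.
  intros [Hx Hwx] [Hy Hwy] Ht k m Hk Hm Hxk.
  destruct (flow_compare x y Hx Hy) as (j & Hj & Hyj & Hxy).
  specialize (Hwx k j Hk Hj Hxk); specialize (Hwy j m Hj Hm Hyj).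
  specialize (Ht j Hj Hyj); pose proof (a_pos j Hj).
  unfold lat in *; nra.
Qed.

(* Water filling: [K |-> sum_j max 0 ((K - b j - t j) / a j)] is continuous and
   crosses 1, and at a crossing [K] every used link has cost exactly [K]. *)
Lemma wardrop_exists (t : nat -> R) :
  (forall i, (i < n)%nat -> 0 <= t i) -> exists x, wardrop n a b t x.
Proof.
  intros Ht.
  set (fill K j := Rmax 0 ((K - (b j + t j)) / a j)).
  set (F K := sumN n (fill K) - 1).
  assert (HF : continuity F).
  { apply continuity_minus; [|apply continuity_const; intros ??; reflexivity].
    apply continuity_sum_f_R0; intros j; apply continuity_Rmax0.
    apply derivable_continuous; reg. }
  assert (HF0 : F 0 < 0).
  { unfold F; rewrite (sumN_ext (fill 0) (fun _ => 0)), sumN_0; [lra|].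
    intros j Hj; unfold fill; apply Rmax_left.
    pose proof (a_pos j Hj); pose proof (b_nonneg j Hj); pose proof (Ht j Hj).
    apply Rmult_le_reg_r with (a j); [lra|].
    unfold Rdiv; rewrite Rmult_assoc, Rinv_l by lra; lra. }
  pose proof (a_pos 0%nat n_pos); pose proof (b_nonneg 0%nat n_pos).
  pose proof (Ht 0%nat n_pos).
  set (Y := b 0%nat + t 0%nat + 2 * a 0%nat).
  assert (HFY : 0 < F Y).
  { assert (Hfill0 : 2 <= fill Y 0%nat).
    { unfold fill, Y; eapply Rle_trans; [|apply Rmax_r].
      replace ((b 0%nat + t 0%nat + 2 * a 0%nat - (b 0%nat + t 0%nat)) / a 0%nat)
        with 2 by (field; lra); lra. }
    pose proof (sumN_ge_term (fill Y) 0%nat n_pos (fun j _ => Rmax_l _ _)).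
    unfold F; lra. }
  destruct (IVT F 0 Y HF ltac:(unfold Y; lra) HF0 HFY) as (K & _ & HK).
  exists (fill K); split; [split; [intros; apply Rmax_l | unfold F in HK; lra]|].
  intros i j Hi Hj Hxi; unfold lat.
  assert (Hcost : forall k, (k < n)%nat ->
            K <= a k * fill K k + b k + t k /\
            (0 < fill K k -> a k * fill K k + b k + t k = K)).
  { intros k Hk; pose proof (a_pos k Hk); unfold fill, Rmax.
    destruct (Rle_dec 0 ((K - (b k + t k)) / a k)) as [Hle|Hgt]; split; intros;
      try (field_simplify; lra).
    apply Rnot_le_lt in Hgt.
    assert (K - (b k + t k) < 0); [|lra].
    apply Rmult_lt_reg_r with (/ a k); [apply Rinv_0_lt_compat; lra | lra]. }
  destruct (Hcost i Hi) as [_ Hi_eq]; destruct (Hcost j Hj) as [Hj_ge _].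
  rewrite (Hi_eq Hxi); lra.
Qed.

Lemma capped_SPNE_flow_pos (c : R) (t x : nat -> R) :
  (forall x0, wardrop n a b (fun _ => 0) x0 -> forall i, (i < n)%nat -> 0 < x0 i) ->
  capped_SPNE n a b c t -> wardrop n a b t x ->
  forall i, (i < n)%nat -> 0 < x i.
Proof.
  intros untolled_pos [Hrange Hspne] Hw i Hi.
  destruct (Rle_or_lt (x i) 0) as [Hxi|]; [exfalso|assumption].
  assert (Hxi0 : x i = 0) by (destruct Hw as [[Hnn _] _]; specialize (Hnn i Hi); lra).
  destruct (Rle_or_lt c 0) as [Hc|Hc].
  - assert (Hw0 : wardrop n a b (fun _ => 0) x).
    { destruct Hw as [Hx Hw]; split; [exact Hx|].
      intros k m Hk Hm Hxk; specialize (Hw k m Hk Hm Hxk).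
      pose proof (Hrange k Hk); pose proof (Hrange m Hm); lra. }
    specialize (untolled_pos x Hw0 i Hi); lra.
  - destruct (wardrop_exists (fun _ => 0)) as [x0 Hw0]; [intros; lra|].
    pose proof (untolled_pos x0 Hw0 i Hi) as Hx0i; pose proof (a_pos i Hi).
    set (s := Rmin c (a i * x0 i / 2)).
    assert (Hs : 0 < s <= c /\ s <= a i * x0 i / 2).
    { unfold s; split; [split; [apply Rmin_glb_lt; nra | apply Rmin_l] | apply Rmin_r]. }
    destruct (wardrop_exists (upd t i s)) as [x' Hw'].
    { intros j Hj; unfold upd; destruct (Nat.eq_dec j i); [lra | apply Hrange, Hj]. }
    assert (Hx'i : x' i = 0).
    { pose proof (Hspne i Hi s ltac:(lra) x x' Hw Hw') as Hprofit.
      destruct Hw' as [[Hnn _] _]; specialize (Hnn i Hi).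
      rewrite Hxi0 in Hprofit; nra. }
    destruct (flow_support x (proj1 Hw)) as (k & Hk & Hxk).
    pose proof (wardrop_level_mono _ _ _ _ Hw0 Hw
                  (fun j Hj _ => proj1 (Hrange j Hj)) i k Hi Hk Hx0i).
    assert (Hsame : forall j, (j < n)%nat -> 0 < x' j -> t j <= upd t i s j).
    { intros j Hj Hx'j; rewrite upd_neq; [lra | intros ->; lra]. }
    pose proof (wardrop_level_mono _ _ _ _ Hw Hw' Hsame k i Hk Hi Hxk).
    rewrite upd_eq, Hx'i in *; unfold lat in *; lra.
Qed.

Section TwoLinks.

Hypothesis two_links : (2 <= n)%nat.

Definition others_inv_slope (i : nat) : R := sumN n (mask (fun j => / a j) i).

Definition inv_demand_slope (i : nat) : R := a i + / others_inv_slope i.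

Lemma others_inv_slope_ge (i j : nat) :
  (j < n)%nat -> j <> i -> / a j <= others_inv_slope i.
Proof.
  intros Hj Hji; unfold others_inv_slope.
  replace (/ a j) with (mask (fun j => / a j) i j)
    by (unfold mask; destruct (Nat.eq_dec j i); congruence).
  apply sumN_ge_term; [exact Hj|].
  intros k Hk; unfold mask; destruct (Nat.eq_dec k i); [lra|].
  left; apply Rinv_0_lt_compat, a_pos, Hk.
Qed.

Lemma others_inv_slope_pos (i : nat) : (i < n)%nat -> 0 < others_inv_slope i.
Proof.
  intros Hi; set (k := if Nat.eq_dec i 0 then 1%nat else 0%nat).
  assert (Hk : (k < n)%nat /\ k <> i) by (unfold k; destruct (Nat.eq_dec i 0); lia).
  pose proof (others_inv_slope_ge i k (proj1 Hk) (proj2 Hk)).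
  pose proof (Rinv_0_lt_compat _ (a_pos k (proj1 Hk))); lra.
Qed.

Lemma inv_demand_slope_pos (i : nat) : (i < n)%nat -> 0 < inv_demand_slope i.
Proof.
  intros Hi; unfold inv_demand_slope.
  pose proof (a_pos i Hi); pose proof (Rinv_0_lt_compat _ (others_inv_slope_pos i Hi)); lra.
Qed.

(* With [q := (s - t i) / inv_demand_slope i], moving [q] units off link [i] and
   spreading them over the other links in proportion to [/ a j] raises every cost
   by [q / others_inv_slope i]; the lower bound [mu] keeps the result a flow. *)
Lemma deviation_equilibrium (t x : nat -> R) (K mu : R) (i : nat) (s : R) :
  (i < n)%nat -> sumN n x = 1 ->
  (forall j, (j < n)%nat -> lat a b j (x j) + t j = K) ->
  (forall j, (j < n)%nat -> mu <= x j) ->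
  t i - inv_demand_slope i * mu <= s <= t i + inv_demand_slope i * mu ->
  exists x', wardrop n a b (upd t i s) x' /\ x' i = x i - (s - t i) / inv_demand_slope i.
Proof.
  intros Hi Hsum HK Hmu Hs.
  set (S := others_inv_slope i); set (P := inv_demand_slope i); set (q := (s - t i) / P).
  assert (HS : 0 < S) by apply (others_inv_slope_pos i Hi).
  assert (HP : 0 < P) by apply (inv_demand_slope_pos i Hi).
  pose proof (a_pos i Hi).
  assert (Hq : - mu <= q <= mu).
  { assert (Hqs : q * P = s - t i) by (unfold q; field; lra).
    fold P in Hs; split; apply Rmult_le_reg_r with P; lra. }
  set (x' := fun j => if Nat.eq_dec j i then x i - q else x j + q / (a j * S)).
  exists x'; split; [|unfold x'; destruct (Nat.eq_dec i i); [reflexivity | congruence]].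
  apply (wardrop_of_level _ _ (K + q / S)); [split|].
  - intros j Hj; specialize (Hmu j Hj); unfold x'.
    destruct (Nat.eq_dec j i) as [->|Hji]; [lra|].
    pose proof (a_pos j Hj).
    assert (Hinv : / a j <= S) by exact (others_inv_slope_ge i j Hj Hji).
    assert (Hr : 0 < / (a j * S) <= 1).
    { split; [apply Rinv_0_lt_compat; nra|].
      rewrite <- Rinv_1; apply Rinv_le_contravar; [lra|].
      rewrite <- (Rinv_r (a j)) by lra; apply Rmult_le_compat_l; lra. }
    unfold Rdiv; nra.
  - rewrite (sumN_split x' i Hi).
    rewrite (sumN_ext (mask x' i) (fun j => mask x i j + q / S * mask (fun j => / a j) i j)).
    + rewrite sumN_plus, sumN_scal; change (sumN n (mask (fun j => / a j) i)) with S.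
      rewrite (sumN_split x i Hi) in Hsum.
      unfold x' at 1; destruct (Nat.eq_dec i i); [|congruence].
      unfold Rdiv; rewrite Rmult_assoc, Rinv_l by lra; lra.
    + intros j Hj; unfold x', mask; destruct (Nat.eq_dec j i); [ring|].
      pose proof (a_pos j Hj); field; split; lra.
  - intros j Hj; specialize (HK j Hj); unfold lat, x' in *.
    destruct (Nat.eq_dec j i) as [->|Hji].
    + rewrite upd_eq; replace s with (t i + P * q) by (unfold q; field; lra).
      unfold P, inv_demand_slope; fold S; rewrite <- HK; field; lra.
    + rewrite upd_neq by exact Hji; pose proof (a_pos j Hj).
      rewrite <- HK; field; split; lra.
Qed.

Lemma deviation_flow_bound (t x x' : nat -> R) (K : R) (i : nat) (s : R) :
  (i < n)%nat -> sumN n x = 1 ->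
  (forall j, (j < n)%nat -> lat a b j (x j) + t j = K) ->
  wardrop n a b (upd t i s) x' -> 0 < x' i ->
  x' i <= x i - (s - t i) / inv_demand_slope i.
Proof.
  intros Hi Hsum HK [[_ Hsum'] Hw] Hx'i.
  set (S := others_inv_slope i); set (K' := a i * x' i + b i + s).
  assert (HS : 0 < S) by apply (others_inv_slope_pos i Hi).
  pose proof (a_pos i Hi); pose proof (HK i Hi) as HKi; unfold lat in HKi.
  assert (Hothers : sumN n (mask (fun j => x j + (K' - K) * / a j) i) <= sumN n (mask x' i)).
  { apply sumN_mask_le; intros j Hj Hji.
    specialize (Hw i j Hi Hj Hx'i); specialize (HK j Hj); pose proof (a_pos j Hj).
    unfold lat in *; rewrite upd_eq, upd_neq in Hw by exact Hji.
    replace (x j + (K' - K) * / a j) with ((a j * x j + K' - K) / a j) by (field; lra).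
    apply Rmult_le_reg_r with (a j); [lra|].
    unfold Rdiv; rewrite Rmult_assoc, Rinv_l by lra; unfold K'; lra. }
  rewrite (sumN_ext _ (fun j => mask x i j + (K' - K) * mask (fun j => / a j) i j)),
    sumN_plus, sumN_scal in Hothers
    by (intros j _; unfold mask; destruct (Nat.eq_dec j i); ring).
  change (sumN n (mask (fun j => / a j) i)) with S in Hothers.
  rewrite (sumN_split x i Hi) in Hsum; rewrite (sumN_split x' i Hi) in Hsum'.
  assert (Hgap : (s - t i) * S <= (x i - x' i) * (1 + a i * S)) by (unfold K' in *; nra).
  replace ((s - t i) / inv_demand_slope i) with ((s - t i) * S / (1 + a i * S))
    by (unfold inv_demand_slope; fold S; field; split; nra).
  apply Rmult_le_reg_r with (1 + a i * S); [nra|].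
  replace ((x i - (s - t i) * S / (1 + a i * S)) * (1 + a i * S))
    with (x i * (1 + a i * S) - (s - t i) * S) by (field; nra).
  nra.
Qed.

Lemma capped_SPNE_toll (c : R) (t x : nat -> R) (K : R) (i : nat) :
  capped_SPNE n a b c t -> wardrop n a b t x ->
  (forall j, (j < n)%nat -> 0 < x j) ->
  (forall j, (j < n)%nat -> lat a b j (x j) + t j = K) ->
  (i < n)%nat -> t i = Rmin (inv_demand_slope i * x i) c.
Proof.
  intros [Hrange Hspne] Hw Hx HK Hi.
  destruct (exists_pos_lower_bound n x Hx) as (mu & Hmu & Hmin).
  pose proof (inv_demand_slope_pos i Hi).
  apply (capped_linear_revenue_local_max _ _ c _ (inv_demand_slope i * mu));
    [lra | apply Hx, Hi | nra | apply Hrange, Hi |].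
  intros s Hs Hsd.
  destruct (deviation_equilibrium t x K mu i s Hi (proj2 (proj1 Hw)) HK Hmin Hsd)
    as (x' & Hw' & Hx'i).
  rewrite <- Hx'i; exact (Hspne i Hi s Hs x x' Hw Hw').
Qed.

Lemma capped_SPNE_of_toll (c : R) (t x : nat -> R) (K : R) :
  (forall i, (i < n)%nat -> 0 <= t i) -> is_flow n x ->
  (forall j, (j < n)%nat -> lat a b j (x j) + t j = K) ->
  (forall i, (i < n)%nat -> 0 < x i) ->
  (forall i, (i < n)%nat -> t i = Rmin (inv_demand_slope i * x i) c) ->
  capped_SPNE n a b c t.
Proof.
  intros Ht Hx HK Hpos Htoll.
  pose proof (wardrop_of_level t x K Hx HK) as Hw.
  split; [intros i Hi; split; [apply Ht, Hi | rewrite (Htoll i Hi); apply Rmin_r]|].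
  intros i Hi s Hs x0 x' Hw0 Hw'.
  pose proof (Ht i Hi); pose proof (a_pos i Hi).
  assert (Hx0i : x i <= x0 i).
  { pose proof (wardrop_level_mono t t x x0 Hw Hw0 (fun j _ _ => Rle_refl _)
                  i i Hi Hi (Hpos i Hi)) as Hmono.
    unfold lat in Hmono; apply Rmult_le_reg_l with (a i); lra. }
  assert (t i * x i <= t i * x0 i) by (apply Rmult_le_compat_l; lra).
  destruct (Rle_or_lt (x' i) 0) as [Hx'i|Hx'i].
  - destruct Hw' as [[Hnn _] _]; pose proof (Hnn i Hi); pose proof (Hpos i Hi); nra.
  - pose proof (deviation_flow_bound t x x' K i s Hi (proj2 Hx) HK Hw' Hx'i).
    pose proof (capped_linear_revenue_max (inv_demand_slope i) (x i) c s
                  (inv_demand_slope_pos i Hi) Hs) as Hmax.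
    rewrite <- (Htoll i Hi) in Hmax.
    assert (s * x' i <= s * (x i - (s - t i) / inv_demand_slope i))
      by (apply Rmult_le_compat_l; lra).
    lra.
Qed.

End TwoLinks.

End Network.

Theorem mainTheorem5 (n : nat) (a b : nat -> R) (c : R) :
  (2 <= n)%nat ->
  (forall i, (i < n)%nat -> 0 < a i) ->
  (forall i, (i < n)%nat -> 0 <= b i) ->
  (forall x0, wardrop n a b (fun _ => 0) x0 -> forall i, (i < n)%nat -> 0 < x0 i) ->
  0 <= c ->
  forall t x : nat -> R,
    (forall i, (i < n)%nat -> 0 <= t i) ->
    is_flow n x ->
    ((capped_SPNE n a b c t /\ wardrop n a b t x) <->
     exists K : R,
       (forall i, (i < n)%nat -> a i * x i + b i + t i = K) /\
       sumN n x = 1 /\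
       (forall i, (i < n)%nat ->
          t i = Rmin ((a i + / sumN n (fun j => if Nat.eq_dec j i then 0 else / a j)) * x i) c) /\
       (forall i, (i < n)%nat -> 0 < x i)).
Proof.
  (* [0 <= c] is implied by [0 <= t i <= c] on either side of the equivalence. *)
  intros two_links a_pos b_nonneg untolled_pos _ t x t_nonneg x_flow.
  assert (n_pos : (0 < n)%nat) by lia.
  split.
  - intros [Hspne Hw].
    pose proof (capped_SPNE_flow_pos n n_pos a b a_pos b_nonneg c t x untolled_pos Hspne Hw)
      as x_pos.
    destruct (wardrop_common_level n n_pos a b t x Hw x_pos) as [K HK].
    exists K; repeat split; [exact HK | apply x_flow | | exact x_pos].
    intros i Hi.
    exact (capped_SPNE_toll n n_pos a b a_pos two_links c t x K i Hspne Hw x_pos HK Hi).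
  - intros (K & HK & _ & Htoll & x_pos); split.
    + exact (capped_SPNE_of_toll n n_pos a b a_pos two_links c t x K
               t_nonneg x_flow HK x_pos Htoll).
    + exact (wardrop_of_level n a b t x K x_flow HK).
Qed.
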